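(* A Boolean set $p\colon X\to B$ has binary meets (i.e. $x\wedge y$ exists in $(X,\le)$ for all $x,y$) if and only if the total space $X^{\ast}$ of its dual étalé space $\widetilde p\colon X^{\ast}\to B^{\ast}$ is Hausdorff.
   Context: Convention: a ''Boolean algebra'' means a generalized Boolean algebra (relatively complemented distributive lattice with $0$). Boolean set: a presheaf of sets $p\colon X\to B$ over a Boolean algebra $B$ (pairwise disjoint $X_e$, restriction maps $x\mapsto x|^e_f$ for $e\ge f$ with $|^e_e=\mathrm{id}$, $(x|^e_f)|^f_g=x|^e_g$) with all $X_e\ne\emptyset$, such that under the order $x\le y$ iff $p(x)\le p(y)$ and $x=y|^{p(y)}_{p(x)}$ there is a least element $0$, compatible pairs ($x\wedge y$ exists and $p(x\wedge y)=p(x)\wedge p(y)$) have joins, and $p(x)=0\Rightarrow x=0$. Dual étalé space: $X^{\ast}$ is the set of ultrafilters (maximal proper non-empty down-directed upward-closed subsets) of $(X,\le)$ with topology generated by $L(a)=\{G\in X^{\ast}: a\in G\}$, $a\in X$; $B^{\ast}$ the set of ultrafilters of $B$ with basis $M(b)=\{F: b\in F\}$; $\widetilde p(G)=p(G)$. *)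

(* the Boolean algebra B is a cbDistrLatticeType
   (sectionally complemented distributive lattice with bottom = generalized
   Boolean algebra). Sets are Prop-valued predicates. *)
From HB Require Import structures.
From mathcomp Require Import all_boot all_order.
Set Implicit Arguments. Unset Strict Implicit. Unset Printing Implicit Defensive.
Import Order.TTheory.
Local Open Scope order_scope.

Section BooleanSets.
Context {d : Order.disp_t} {B : cbDistrLatticeType d} {X : Type}.
(* A presheaf of sets over B is given by its total space X, the projection
   p : X -> B (so X_e := p^-1(e), automatically pairwise disjoint) and the
   restriction maps res x f = x|^{p x}_f, meaningful for f <= p x. *)
Variables (p : X -> B) (res : X -> B -> X).

Definition leX (x y : X) : Prop := p x <= p y /\ x = res y (p x).

Definition is_lbX (x y m : X) : Prop := leX m x /\ leX m y.
Definition is_meetX (x y m : X) : Prop :=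
  is_lbX x y m /\ forall z, is_lbX x y z -> leX z m.
Definition is_joinX (x y j : X) : Prop :=
  leX x j /\ leX y j /\ forall z, leX x z -> leX y z -> leX j z.

Definition compatibleX (x y : X) : Prop :=
  exists m, is_meetX x y m /\ p m = p x `&` p y.

Definition is_leastX (z : X) : Prop := forall y, leX z y.

Definition boolean_set : Prop :=
  (forall x f, f <= p x -> p (res x f) = f) /\
  (forall x, res x (p x) = x) /\
  (forall x f g, g <= f -> f <= p x -> res (res x f) g = res x g) /\
  (forall e : B, exists x, p x = e) /\
  (exists z0, is_leastX z0 /\
     (forall x y, compatibleX x y -> exists j, is_joinX x y j) /\
     (forall x, p x = \bot -> x = z0)).

Definition has_binary_meets : Prop := forall x y, exists m, is_meetX x y m.

Definition is_filterX (F : X -> Prop) : Prop :=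
  (exists x, F x) /\ (exists x, ~ F x) /\
  (forall a b, F a -> F b -> exists c, F c /\ leX c a /\ leX c b) /\
  (forall a b, F a -> leX a b -> F b).

Definition ultrafilterX (F : X -> Prop) : Prop :=
  is_filterX F /\
  forall G, is_filterX G -> (forall x, F x -> G x) -> forall x, G x -> F x.

(* The topology on X^* (the set of ultrafilters) generated by the sets
   L(a) = {G : a \in G}: the smallest family of subsets of X^* containing
   X^* and all L(a), closed under binary intersections and arbitrary unions
   (and extensional equality). Subsets of X^* are predicates on X -> Prop
   implying ultrafilterX. *)
Inductive dual_open : ((X -> Prop) -> Prop) -> Prop :=
| do_basic (a : X) : dual_open (fun G => ultrafilterX G /\ G a)
| do_top : dual_open ultrafilterX
| do_inter U V : dual_open U -> dual_open V -> dual_open (fun G => U G /\ V G)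
| do_union (I : Type) (U : I -> (X -> Prop) -> Prop) :
    (forall i, dual_open (U i)) -> dual_open (fun G => exists i, U i G)
| do_ext U V : dual_open U -> (forall G, U G <-> V G) -> dual_open V.

(* points of X^* are ultrafilters, compared as subsets of X (extensionally) *)
Definition dual_hausdorff : Prop :=
  forall G H, ultrafilterX G -> ultrafilterX H -> ~ (forall x, G x <-> H x) ->
  exists U V, dual_open U /\ dual_open V /\ U G /\ V H /\
              forall K, ~ (U K /\ V K).

End BooleanSets.

From HB Require Import structures.
From mathcomp Require Import all_boot all_order.
From mathcomp Require Import boolp classical_sets.
Set Implicit Arguments. Unset Strict Implicit. Unset Printing Implicit Defensive.
Import Order.Theory.
Local Open Scope order_scope.

(* Two ultrafilters of X are separated by basic opens L(a), L(b) as soon as no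
   ultrafilter contains both a and b, and every open is a union of basic ones.
   If meets exist and H is an ultrafilter avoiding a, pick b0 in H and m = a /\ b0:
   either H reaches below m, forcing a into H, or H contains b0 restricted away
   from p m, which no ultrafilter shares with a.
   Conversely, if x /\ y does not exist, the degrees e <= c := p x /\ p y on which
   x and y agree form an ideal with no largest element.  Zorn's lemma then gives an
   ultrafilter G through all x|(c \ e) whose members all overlap some agreement
   degree, and an ultrafilter H generated by the y|(p g) for g in G below x|c.
   They differ, yet every L(a) containing G meets every L(b) containing H, since
   x and y coincide below any such overlap. *)

Section BooleanSetDuality.
Variables (d : Order.disp_t) (B : cbDistrLatticeType d) (X : Type).
Variables (p : X -> B) (res : X -> B -> X).

Local Notation le := (leX p res).
Local Notation uf := (ultrafilterX p res).

Definition downdirX (A : X -> Prop) : Prop :=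
  forall a b, A a -> A b -> exists c, A c /\ le c a /\ le c b.

Definition upclosedX (A : X -> Prop) : Prop :=
  forall a b, A a -> le a b -> A b.

Definition orderIdeal (I : B -> Prop) : Prop :=
  I \bot /\ (forall f g, f <= g -> I g -> I f) /\
  (forall f g, I f -> I g -> I (f `|` g)).

Definition avoidsI (I : B -> Prop) (A : X -> Prop) : Prop :=
  forall z, A z -> ~ I (p z).

Lemma uf_downdir F : uf F -> downdirX F.
Proof. by move=> [[_ [_ []]]]. Qed.

Lemma uf_upclosed F : uf F -> upclosedX F.
Proof. by move=> [[_ [_ []]]]. Qed.

Lemma uf_nonempty F : uf F -> exists a, F a.
Proof. by move=> [[]]. Qed.

Lemma dual_open_uf U : dual_open p res U -> forall K, U K -> uf K.
Proof.
elim=> [a K [] | K | U1 V1 _ IH1 _ _ K [h _] | I F _ IH K [i h] | U1 V1 _ IH e K]//.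
- exact: IH1.
- exact: IH h.
- by move/e; apply: IH.
Qed.

Lemma dual_open_basic U : dual_open p res U -> forall K, U K ->
  exists a, K a /\ forall K', uf K' -> K' a -> U K'.
Proof.
elim=> [a K [_ Ka] | K uK | U1 V1 o1 IH1 o2 IH2 K [h1 h2] | I F _ IH K [i h]
       | U1 V1 _ IH e K].
- by exists a; split=> // K' ? ?; split.
- by have [a Ka] := uf_nonempty uK; exists a; split.
- have [a1 [Ka1 H1]] := IH1 K h1; have [a2 [Ka2 H2]] := IH2 K h2.
  have [c [Kc [c1 c2]]] := uf_downdir (dual_open_uf o1 h1) Ka1 Ka2.
  exists c; split=> // K' uK' K'c.
  split; [apply: H1 | apply: H2] => //.
    exact: (uf_upclosed uK' K'c c1).
  exact: (uf_upclosed uK' K'c c2).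
- by have [a [Ka Ha]] := IH i K h; exists a; split=> // K' u1 u2; exists i; apply: Ha.
- move/e => h; have [a [Ka Ha]] := IH K h; exists a; split=> // K' u1 u2.
  by apply/e; apply: Ha.
Qed.

Lemma separated_by_basic G H a b : uf G -> uf H -> G a -> H b ->
  (forall K, uf K -> K a -> K b -> False) ->
  exists U V, dual_open p res U /\ dual_open p res V /\ U G /\ V H /\
              forall K, ~ (U K /\ V K).
Proof.
move=> uG uH Ga Hb disj; exists (fun K => uf K /\ K a), (fun K => uf K /\ K b).
do 2 (split; first exact: do_basic).
by do 2 split => //; move=> K [[uK Ka] [_ Kb]]; apply: disj Ka Kb.
Qed.

Lemma inseparable G H :
  (forall a b, G a -> H b -> exists K, uf K /\ K a /\ K b) ->
  ~ exists U V, dual_open p res U /\ dual_open p res V /\ U G /\ V H /\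
                forall K, ~ (U K /\ V K).
Proof.
move=> meet [U [V [oU [oV [UG [VH disj]]]]]].
have [a [Ga aU]] := dual_open_basic oU UG; have [b [Hb bV]] := dual_open_basic oV VH.
have [K [uK [Ka Kb]]] := meet a b Ga Hb.
exact: disj K (conj (aU K uK Ka) (bV K uK Kb)).
Qed.

Hypothesis p_res : forall x f, f <= p x -> p (res x f) = f.
Hypothesis res_id : forall x, res x (p x) = x.
Hypothesis res_res : forall x f g, g <= f -> f <= p x -> res (res x f) g = res x g.

Lemma leX_refl x : le x x.
Proof. by split; rewrite ?res_id. Qed.

Lemma leX_trans x y z : le x y -> le y z -> le x z.
Proof.
move=> [pxy ex] [pyz ey]; split; first exact: le_trans pxy pyz.
by rewrite {1}ex {1}ey res_res.
Qed.

Lemma leX_eq x y : le x y -> p y <= p x -> x = y.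
Proof.
move=> [pxy ex] pyx; rewrite ex.
by have -> : p x = p y by apply/eqP; rewrite eq_le pxy pyx.
Qed.

Lemma res_leX x f : f <= p x -> le (res x f) x.
Proof. by move=> fx; split; rewrite p_res. Qed.

Lemma res_leX_res x f g : g <= f -> f <= p x -> le (res x g) (res x f).
Proof.
move=> gf fx; have gx := le_trans gf fx.
by split; rewrite ?p_res // res_res.
Qed.

Lemma leX_res z x f : le z x -> p z <= f -> f <= p x -> le z (res x f).
Proof.
move=> [zx ez] zf fx; split; first by rewrite p_res.
by rewrite res_res // p_res.
Qed.

Lemma leX_below_common z w x : le z x -> le w x -> p z <= p w -> le z w.
Proof. by move=> [zx ez] [wx ew] zw; split; rewrite // {1}ez {1}ew res_res. Qed.

Lemma leX_res_diff z w e : le z w -> le (res z (p z `\` e)) (res w (p w `\` e)).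
Proof.
move=> [zw ez]; rewrite {1}ez res_res ?leBx //.
by apply: res_leX_res; [apply: leBl | apply: leBx].
Qed.

Definition restrict_away (U : X -> Prop) (e : B) (y : X) : Prop :=
  exists2 w, U w & le (res w (p w `\` e)) y.

Lemma sub_restrict_away U e z : U z -> restrict_away U e z.
Proof. by move=> Uz; exists z => //; apply: res_leX; apply: leBx. Qed.

Lemma restrict_away_p U e z : restrict_away U e z -> exists2 w, U w & p w `\` e <= p z.
Proof. by move=> [w Uw [wz _]]; exists w; rewrite // -(p_res (leBx (p w) e)). Qed.

Lemma restrict_away_downdir U e : downdirX U -> downdirX (restrict_away U e).
Proof.
move=> dirU a b [w1 U1 h1] [w2 U2 h2].
have [c [Uc [cw1 cw2]]] := dirU _ _ U1 U2.
exists (res c (p c `\` e)); split; first by exists c => //; apply: leX_refl.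
by split; [apply: leX_trans h1 | apply: leX_trans h2]; apply: leX_res_diff.
Qed.

Lemma restrict_away_upclosed U e : upclosedX (restrict_away U e).
Proof. by move=> a b [w Uw wa] ab; exists w => //; apply: leX_trans wa ab. Qed.

Variable z0 : X.
Hypothesis p_eq0 : forall x, p x = \bot -> x = z0.

Lemma res_bot x : res x \bot = z0.
Proof. by apply: p_eq0; rewrite p_res ?le0x. Qed.

Lemma p_z0 : p z0 = \bot.
Proof. by rewrite -(res_bot z0) p_res ?le0x. Qed.

Lemma z0_leX x : le z0 x.
Proof. by rewrite -(res_bot x); apply: res_leX; apply: le0x. Qed.

Lemma filter_p_bot F z : is_filterX p res F -> F z -> p z <= \bot -> False.
Proof.
move=> [_ [[x nFx] [_ upF]]] Fz; rewrite lex0 => /eqP/p_eq0 zz0.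
by apply: nFx; apply: upF (z0_leX x); rewrite -zz0.
Qed.

Lemma filter_disjoint F a b :
  is_filterX p res F -> F a -> F b -> p a `&` p b = \bot -> False.
Proof.
move=> fF Fa Fb ab0; have [_ [_ [dirF _]]] := fF.
have [c [Fc [[ca _] [cb _]]]] := dirF _ _ Fa Fb.
by apply: (filter_p_bot fF Fc); rewrite -ab0 lexI ca cb.
Qed.

(* If no member of the ultrafilter U lies over a degree below e, cutting e out of
   the degrees of U generates a filter containing U, hence U itself. *)
Lemma uf_restrict_away U e : uf U -> (forall w, U w -> ~ p w <= e) ->
  forall w, U w -> U (res w (p w `\` e)).
Proof.
move=> uU noe w Uw; have [[_ [_ [dirU _]]] maxU] := uU.
apply: (maxU (restrict_away U e)); last by exists w => //; apply: leX_refl.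
- split; first by exists w; apply: sub_restrict_away.
  split; last by split; [apply: restrict_away_downdir | apply: restrict_away_upclosed].
  exists z0 => /restrict_away_p [v Uv]; rewrite p_z0 leBLR joinx0; exact: noe.
- by move=> z; apply: sub_restrict_away.
Qed.

Lemma uf_below_or_away U w e : uf U -> U w ->
  (exists u, U u /\ le u w /\ p u <= e) \/ U (res w (p w `\` e)).
Proof.
move=> uU Uw; have [[v [Uv ve]] | nov] := pselect (exists v, U v /\ p v <= e).
  left; have [u [Uu [uv uw]]] := uf_downdir uU Uv Uw.
  by exists u; split=> //; split=> //; apply: le_trans uv.1 ve.
by right; apply: uf_restrict_away => // v Uv ve; apply: nov; exists v.
Qed.

Section UltrafilterExtension.
Variables (I : B -> Prop) (S : X -> Prop).
Hypotheses (I_ideal : orderIdeal I) (S_nonempty : exists s, S s).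
Hypotheses (S_downdir : downdirX S) (S_avoids : avoidsI I S).

(* The seed condition is vacuous for the empty set, so that the union of the
   empty chain is admissible in Zorn's lemma. *)
Definition seeded_filter (A : X -> Prop) : Prop :=
  downdirX A /\ upclosedX A /\ avoidsI I A /\ ((exists a, A a) -> forall s, S s -> A s).

Lemma maximal_seeded_filter : exists M, seeded_filter M /\
  forall N, seeded_filter N -> (forall z, M z -> N z) -> forall z, N z -> M z.
Proof.
have [|M [PM Mmax]] := @Zorn_bigcup X seeded_filter.
  move=> F FP Ftot; split; [|split; [|split]].
  - move=> a b [A FA Aa] [A' FA' A'b].
    have [AA'|A'A] := Ftot A A' FA FA'.
      have [c [A'c cab]] := (FP _ FA').1 a b (AA' a Aa) A'b.
      by exists c; split=> //; exists A'.
    have [c [Ac cab]] := (FP _ FA).1 a b Aa (A'A b A'b).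
    by exists c; split=> //; exists A.
  - by move=> a b [A FA Aa] ab; exists A => //; apply: (FP _ FA).2.1 Aa ab.
  - by move=> z [A FA Az]; apply: (FP _ FA).2.2.1 Az.
  - move=> [a [A FA Aa]] s Ss; exists A => //.
    by apply: (FP _ FA).2.2.2 => //; exists a.
exists M; split=> // N PN MN z Nz; apply: contrapT => nMz.
by apply: (Mmax N) => //; split=> // NM; apply: nMz; apply: NM.
Qed.

Lemma uf_extend : exists M, uf M /\ (forall s, S s -> M s) /\ avoidsI I M.
Proof.
have [I0 [I_down I_join]] := I_ideal; have [s0 Ss0] := S_nonempty.
have [M [[Mdir [Mup [Mav Mseed]]] Mmax]] := maximal_seeded_filter.
have up_seeded : seeded_filter (fun z => exists2 s, S s & le s z).
  split; [|split; [|split]].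
  - move=> a b [s1 S1 h1] [s2 S2 h2]; have [s3 [S3 [h31 h32]]] := S_downdir S1 S2.
    exists s3; split; first by exists s3 => //; apply: leX_refl.
    by split; [apply: leX_trans h31 h1 | apply: leX_trans h32 h2].
  - by move=> a b [s Ss h] ab; exists s => //; apply: leX_trans h ab.
  - by move=> z [s Ss [sz _]] Iz; apply: (S_avoids Ss); apply: I_down Iz.
  - by move=> _ s Ss; exists s => //; apply: leX_refl.
have SM : forall s, S s -> M s.
  apply: Mseed; apply: contrapT => Mempty; apply: (Mempty); exists s0.
  apply: (Mmax _ up_seeded); last by exists s0 => //; apply: leX_refl.
  by move=> z Mz; case: Mempty; exists z.
have fM : is_filterX p res M.
  split; first by exists s0; apply: SM.
  by split=> //; exists z0 => Mz0; apply: (Mav z0 Mz0); rewrite p_z0.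
exists M; split; last by [].
split=> // N fN MN; apply: (Mmax N) => //.
have [_ [_ [Ndir Nup]]] := fN.
split=> //; split=> //; split; last by move=> _ s Ss; apply: MN; apply: SM.
move=> n Nn In.
have away_seeded : seeded_filter (restrict_away M (p n)).
  split; first exact: restrict_away_downdir.
  split; first exact: restrict_away_upclosed.
  split; last by move=> _ s Ss; apply: sub_restrict_away; apply: SM.
  move=> z /restrict_away_p [w Mw wz] Iz; apply: (Mav w Mw).
  rewrite -(joinIB (p n) (p w)); apply: I_join; first by apply: I_down In; apply: leIr.
  exact: I_down Iz.
have Mr : M (res s0 (p s0 `\` p n)).
  apply: (Mmax _ away_seeded); first by move=> z; apply: sub_restrict_away.
  by exists s0; [apply: SM | apply: leX_refl].
by apply: (filter_disjoint fN Nn (MN _ Mr)); rewrite p_res ?leBx // diffKI.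
Qed.

End UltrafilterExtension.

Lemma bot_ideal : orderIdeal (fun f => f = \bot).
Proof.
split=> //; split=> [f g fg gb | f g -> ->]; last by rewrite joinxx.
by apply/eqP; rewrite -lex0 -gb.
Qed.

Lemma uf_through z : p z != \bot -> exists K, uf K /\ K z.
Proof.
move=> pz; have dir : downdirX (eq^~ z).
  by move=> _ _ -> ->; exists z; split=> //; split; apply: leX_refl.
have avoid : avoidsI (fun f => f = \bot) (eq^~ z) by move=> _ ->; apply/eqP.
have [K [uK [SK _]]] := uf_extend bot_ideal (ex_intro _ z erefl) dir avoid.
by exists K; split=> //; apply: SK.
Qed.

Lemma uf_separate H a : has_binary_meets p res -> uf H -> ~ H a ->
  exists2 b, H b & forall K, uf K -> K a -> K b -> False.
Proof.
move=> meets uH nHa; have [b0 Hb0] := uf_nonempty uH.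
have [m [[ma mb0] m_max]] := meets a b0.
have [[u [Hu [ub0 um]]] | Hb] := uf_below_or_away (p m) uH Hb0.
  by case: nHa; apply: (uf_upclosed uH (uf_upclosed uH Hu (leX_below_common ub0 mb0 um))).
exists (res b0 (p b0 `\` p m)) => // K uK Ka Kb.
have [k [Kk [ka kb]]] := uf_downdir uK Ka Kb.
have km : le k m by apply: m_max; split=> //; apply: leX_trans kb (res_leX (leBx _ _)).
apply: (filter_p_bot uK.1 Kk); rewrite -(diffKI (p b0) (p m)) lexI km.1.
by have := kb.1; rewrite p_res ?leBx.
Qed.

Lemma meets_hausdorff : has_binary_meets p res -> dual_hausdorff p res.
Proof.
move=> meets G H uG uH GneH.
have /existsNP [a GneHa] : ~ forall a, G a <-> H a by [].
have [Ga | nGa] := pselect (G a).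
  have [b Hb disj] : exists2 b, H b & forall K, uf K -> K a -> K b -> False.
    by apply: uf_separate => // Ha; apply: GneHa.
  exact: separated_by_basic Ga Hb disj.
have Ha : H a by apply: contrapT => nHa; apply: GneHa.
have [b Gb disj] := uf_separate meets uG nGa.
by apply: separated_by_basic Gb Ha _ => // K uK Kb Ka; apply: disj Ka Kb.
Qed.

Hypothesis compatible_join :
  forall x y, compatibleX p res x y -> exists j, is_joinX p res x y j.

Section Agreement.
Variables x y : X.

Local Notation c := (p x `&` p y).

Definition agree (e : B) : Prop := e <= c /\ res x e = res y e.

Lemma le_pxy e : e <= c -> e <= p x /\ e <= p y.
Proof. by move=> ec; apply/andP; rewrite -lexI. Qed.

Lemma agree_bot : agree \bot.
Proof. by split; rewrite ?le0x ?res_bot. Qed.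

Lemma agree_join e1 e2 : agree e1 -> agree e2 -> agree (e1 `|` e2).
Proof.
move=> [e1c xy1] [e2c xy2]; have e12c : e1 `|` e2 <= c by rewrite leUx e1c.
have [[e1x e1y] [e2x e2y]] := (le_pxy e1c, le_pxy e2c).
have [e12x e12y] := le_pxy e12c.
have [j [x1j [x2j j_min]]] : exists j, is_joinX p res (res x e1) (res x e2) j.
  have e12x' : e1 `&` e2 <= p x := le_trans (leIl _ _) e1x.
  apply: compatible_join; exists (res x (e1 `&` e2)); split; last by rewrite !p_res.
  split; first by split; apply: res_leX_res => //; [apply: leIl | apply: leIr].
  move=> z [z1 z2]; apply: leX_res (leX_trans z1 (res_leX e1x)) _ e12x'.
  by rewrite lexI -{1}(p_res e1x) -(p_res e2x) z1.1 z2.1.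
have pj : e1 `|` e2 <= p j.
  by rewrite leUx -{1}(p_res e1x) -(p_res e2x) x1j.1 x2j.1.
have jx : j = res x (e1 `|` e2).
  apply: leX_eq; last by rewrite p_res.
  by apply: j_min; apply: res_leX_res => //; [apply: leUl | apply: leUr].
have jy : j = res y (e1 `|` e2).
  apply: leX_eq; last by rewrite p_res.
  by apply: j_min; rewrite ?xy1 ?xy2; apply: res_leX_res => //; [apply: leUl | apply: leUr].
by split; rewrite // -jx -jy.
Qed.

Lemma meet_of_max_agree e : agree e -> (forall e', agree e' -> e' <= e) ->
  is_meetX p res x y (res x e).
Proof.
move=> [ec xye] e_max; have [ex ey] := le_pxy ec.
split; first by split; [apply: res_leX | rewrite xye; apply: res_leX].
move=> z [zx zy]; apply: (leX_res zx _ ex); apply: e_max.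
by split; [rewrite lexI zx.1 zy.1 | rewrite -zx.2 -zy.2].
Qed.

Hypothesis no_max_agree : ~ exists e, agree e /\ forall e', agree e' -> e' <= e.

Definition agree_perp (f : B) : Prop := forall e, agree e -> f `&` e = \bot.

Lemma agree_perp_ideal : orderIdeal agree_perp.
Proof.
split; first by move=> e _; rewrite meet0x.
split=> [f g fg g_perp e ae | f g f_perp g_perp e ae].
  by apply/eqP; rewrite -lex0 -(g_perp e ae) leI2.
by rewrite meetUl f_perp // g_perp // joinxx.
Qed.

Lemma not_agree_perp_diff e : agree e -> ~ agree_perp (c `\` e).
Proof.
move=> ae perp; apply: no_max_agree; exists e; split=> // e' ae'.
have : e' `\` e <= \bot.
  by rewrite -(perp e' ae') lexI leBx andbT; apply: leBl; apply: ae'.1.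
by rewrite leBLR joinx0.
Qed.

Lemma diff_le_px e : c `\` e <= p x.
Proof. exact: le_trans (leBx _ _) (leIl _ _). Qed.

Lemma exists_uf_left : exists G, uf G /\
  (forall e, agree e -> G (res x (c `\` e))) /\ avoidsI agree_perp G.
Proof.
pose S z := exists2 e, agree e & z = res x (c `\` e).
have S_dir : downdirX S.
  move=> _ _ [e1 a1 ->] [e2 a2 ->].
  exists (res x (c `\` (e1 `|` e2))); split.
    by exists (e1 `|` e2) => //; apply: agree_join.
  by split; apply: res_leX_res (diff_le_px _); apply: leBr; [apply: leUl | apply: leUr].
have S_avoids : avoidsI agree_perp S.
  by move=> _ [e ae ->]; rewrite p_res ?diff_le_px //; apply: not_agree_perp_diff.
have S_ne : exists s, S s by exists (res x (c `\` \bot)), \bot => //; apply: agree_bot.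
have [G [uG [SG G_perp]]] := uf_extend agree_perp_ideal S_ne S_dir S_avoids.
by exists G; split=> //; split=> // e ae; apply: SG; exists e.
Qed.

Section LeftUltrafilter.
Variable G : X -> Prop.
Hypotheses (uG : uf G) (G_diff : forall e, agree e -> G (res x (c `\` e))).
Hypothesis G_perp : avoidsI agree_perp G.

Lemma uf_left_res : G (res x c).
Proof. by have := G_diff agree_bot; rewrite diffx0. Qed.

Lemma exists_uf_right : exists H, uf H /\
  forall g, G g -> le g (res x c) -> H (res y (p g)).
Proof.
have gy g : le g (res x c) -> p g <= p y.
  by move=> [+ _]; rewrite p_res ?leIl // => /le_trans; apply; apply: leIr.
pose S z := exists g, G g /\ le g (res x c) /\ z = res y (p g).
have S_dir : downdirX S.
  move=> _ _ [g1 [G1 [g1x ->]]] [g2 [G2 [g2x ->]]].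
  have [g3 [G3 [g31 g32]]] := uf_downdir uG G1 G2.
  have g3x := leX_trans g31 g1x.
  exists (res y (p g3)); split; first by exists g3.
  by split; apply: res_leX_res; rewrite ?gy //; [apply: g31.1 | apply: g32.1].
have S_avoids : avoidsI (fun f => f = \bot) S.
  move=> _ [g [Gg [gx ->]]]; rewrite p_res ?gy // => g0.
  by apply: (filter_p_bot uG.1 Gg); rewrite g0.
have S_ne : exists s, S s by exists (res y (p (res x c))), (res x c); split;
  [apply: uf_left_res | split; first by apply: leX_refl].
have [H [uH [SH _]]] := uf_extend bot_ideal S_ne S_dir S_avoids.
by exists H; split=> // g Gg gx; apply: SH; exists g.
Qed.

Section RightUltrafilter.
Variable H : X -> Prop.
Hypotheses (uH : uf H) (H_right : forall g, G g -> le g (res x c) -> H (res y (p g))).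

Lemma uf_right_res : H (res y c).
Proof.
by have := H_right uf_left_res (leX_refl _); rewrite p_res ?leIl.
Qed.

Lemma uf_left_neq_right : ~ (forall z, G z <-> H z).
Proof.
move=> GH; have Gy : G (res y c) by apply/GH; apply: uf_right_res.
have [h [Gh [hx hy]]] := uf_downdir uG uf_left_res Gy.
have hx' := leX_trans hx (res_leX (leIl _ _)).
have hy' := leX_trans hy (res_leX (leIr _ _)).
have ah : agree (p h).
  by split; [rewrite -(p_res (leIl (p x) (p y))); apply: hx.1 | rewrite -hx'.2 -hy'.2].
apply: (filter_disjoint uG.1 Gh (G_diff ah)).
by rewrite p_res ?diff_le_px // diffKI.
Qed.

Lemma basic_nbhds_meet a b : G a -> H b -> exists K, uf K /\ K a /\ K b.
Proof.
move=> Ga Hb; have [h [Hh [hb hyc]]] := uf_downdir uH Hb uf_right_res.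
have hy := leX_trans hyc (res_leX (leIr _ _)).
have [[u [Gu [uxc uh]]] | Gaway] := uf_below_or_away (p h) uG uf_left_res; last first.
  have := H_right Gaway (res_leX (leBx _ _)); rewrite !p_res ?leIl ?leBx // => Hyd.
  exfalso; apply: (filter_disjoint uH.1 Hh Hyd); rewrite p_res ?diffKI //.
  exact: le_trans (leBx _ _) (leIr _ _).
have [g [Gg [gu ga]]] := uf_downdir uG Gu Ga.
have gx := leX_trans (leX_trans gu uxc) (res_leX (leIl _ _)).
have /existsNP [e /not_implyP [ae ge]] := G_perp Gg.
have [fe fg] : p g `&` e <= e /\ p g `&` e <= p g by split; [apply: leIr | apply: leIl].
have [fx fy] := le_pxy (le_trans fe ae.1).
have xyf : res x (p g `&` e) = res y (p g `&` e).
  rewrite -(res_res fe (le_trans ae.1 (leIl _ _))) ae.2 res_res //.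
  exact: le_trans ae.1 (leIr _ _).
have [K [uK Kxf]] : exists K, uf K /\ K (res x (p g `&` e)).
  by apply: uf_through; rewrite p_res //; apply/eqP.
exists K; split=> //; split.
  apply: (uf_upclosed uK Kxf); apply: leX_trans ga.
  by apply: leX_below_common (res_leX fx) gx _; rewrite p_res.
rewrite xyf in Kxf; apply: (uf_upclosed uK Kxf); apply: leX_trans hb.
apply: leX_below_common (res_leX fy) hy _.
by rewrite p_res // (le_trans fg (le_trans gu.1 uh)).
Qed.

End RightUltrafilter.
End LeftUltrafilter.

Lemma no_max_agree_not_hausdorff : ~ dual_hausdorff p res.
Proof.
move=> hd; have [G [uG [G_diff G_perp]]] := exists_uf_left.
have [H [uH H_right]] := exists_uf_right uG G_diff.
apply: (inseparable (basic_nbhds_meet uG G_diff G_perp uH H_right)).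
exact: (hd G H uG uH (uf_left_neq_right uG G_diff H_right)).
Qed.

End Agreement.

Lemma hausdorff_meets : dual_hausdorff p res -> has_binary_meets p res.
Proof.
move=> hd x y.
have [[e [ae e_max]] | no_max] :=
  pselect (exists e, agree x y e /\ forall e', agree x y e' -> e' <= e).
  by exists (res x e); apply: meet_of_max_agree.
by case: (no_max_agree_not_hausdorff no_max hd).
Qed.

End BooleanSetDuality.

Theorem proposition3p15 (d : Order.disp_t) (B : cbDistrLatticeType d) (X : Type)
  (p : X -> B) (res : X -> B -> X) :
  boolean_set p res ->
  (has_binary_meets p res <-> dual_hausdorff p res).
Proof.
move=> [p_res [res_id [res_res [_ [z0 [_ [compatible_join p_eq0]]]]]]].
split; first exact: (meets_hausdorff p_res res_id res_res p_eq0).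
exact: (hausdorff_meets p_res res_id res_res p_eq0 compatible_join).
Qed.
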